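(* Let $F,G\in\mathbb{A}$ and $\tilde H\in\mathbb{A}_q$ be as in the BQTRU key setting below, so that $\tilde H\equiv F^{-1}\circ G+\vartheta\pmod q$. Let $$\chi=\{\tau'\in\mathbb{A}: \exists F'\in\mathbb{A},\ \exists\alpha'\in\mathbb{A}\ \text{with}\ F\circ F'=F'\circ F\equiv 1+\alpha'\circ\tau'\!\!\pmod q\ \text{and}\ \tilde H\equiv F'\circ G+\tau'\!\!\pmod q\}.$$ Then for every $\tau'\in\chi$ with $\tau'\neq\vartheta$, $\|\overrightarrow{\rho(\tau')}\|_H>4|T|$.
   Context: Setting: $n$ prime, $p,q$ distinct primes with $\gcd(p,q)=\gcd(n,q)=1$ and $n\mid(q-1)$. $R'=\mathbb{Z}[x,y]/\langle x^n-1,y^n-1\rangle$, $R'_q=\mathbb{Z}_q[x,y]/\langle x^n-1,y^n-1\rangle$; $\mathbb{A},\mathbb{A}_q,\mathbb{L}_q$ are the quaternion algebras over $R'$, $R'_q$, $\mathbb{Z}_q$ (free module on $1,i,j,k$, scalars central, $i^2=j^2=1$, $i\circ j=-j\circ i=k$); ''$\pmod q$'' means equality after reducing coefficients mod $q$. $E=\{(a,b)\in\mathbb{Z}_q^2:a^n=b^n=1\}$, enumerated $(a_1,b_1),\dots,(a_{n^2},b_{n^2})$; $\lambda_{a,b}(x,y)=\frac{ab}{n^2}\cdot\frac{x^n-1}{x-a}\cdot\frac{y^n-1}{y-b}$ over $\mathbb{Z}_q$. For $F\in\mathbb{A}$ (reduced mod $q$) and $(a,b)\in E$, $F(a,b)\in\mathbb{L}_q$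 is componentwise evaluation, and $\overrightarrow{\rho(F)}\in\mathbb{Z}_q^{4n^2}$ is the vector $(\rho(f_0),\rho(f_1),\rho(f_2),\rho(f_3))$ with $\rho(f_t)=(f_t(a_1,b_1),\dots,f_t(a_{n^2},b_{n^2}))$; $\|\cdot\|_H$ is the Hamming weight (number of nonzero coordinates). Key setting: $G=g_0+g_1i+g_2j+g_3k$ and $F=f_0+f_1i+f_2j+f_3k$ with all $f_t,g_t$ ternary (coefficients in $\{-1,0,1\}$); $T=\bigcap_{t=0}^3\{(a,b)\in E: g_t(a,b)=0\}\ne\emptyset$, with the enumeration chosen so that $T=\{(a_1,b_1),\dots,(a_{|T|},b_{|T|})\}$; $\{(a,b)\in E: N(F)(a,b)=0\}\subseteq T$ where $N(F)=f_0^2-f_1^2-f_2^2-f_3^2$. $\sigma=\sum_{i=1}^{|T|}q_i\lambda_{a_i,b_i}$ with $q_i\in\mathbb{Z}_q$ nonzero; $Q=\langle q,\sigma\rangle\subseteq R'$, $J=Q+Qi+Qj+Qk$; $F^{-1}\in\mathbb{A}$ satisfies $F\circ F^{-1}=F^{-1}\circ F\equiv 1\pmod J$. $W=w_0+w_1i+w_2j+w_3k\in\mathbb{L}_q$ is invertible with $w_0,w_1,w_2,w_3\ne0$; $\vartheta=W\circ\sigma$, and $\tilde H\equiv F^{-1}\circ G+\vartheta\pmod q$. *)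

From HB Require Import structures.
From mathcomp Require Import all_boot all_order all_algebra.
Set Implicit Arguments. Unset Strict Implicit. Unset Printing Implicit Defensive.
Import Order.TTheory GRing.Theory Num.Theory.
Local Open Scope ring_scope.

(* R' = R[x,y]/<x^n-1,y^n-1> represented by coefficient arrays:
   f i j = coefficient of x^i y^j, 0 <= i,j < n. *)
Definition Rp (R : nzRingType) (n : nat) := 'M[R]_n.

Definition pmul (R : nzRingType) (n : nat) (a b : 'M[R]_n) : 'M[R]_n :=
  \matrix_(i, j) \sum_(k : 'I_n * 'I_n)
     \sum_(l : 'I_n * 'I_n | ((k.1 + l.1) %% n == i)%N && ((k.2 + l.2) %% n == j)%N)
       a k.1 k.2 * b l.1 l.2.

Definition pconst (R : nzRingType) (n : nat) (c : R) : 'M[R]_n :=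
  \matrix_(i, j) (if ((i : nat) == 0%N) && ((j : nat) == 0%N) then c else 0).

Definition predq (q n : nat) (f : 'M[int]_n) : 'M['F_q]_n :=
  map_mx (fun z : int => (z%:~R : 'F_q)) f.

Definition peval (q n : nat) (f : 'M['F_q]_n) (e : 'F_q * 'F_q) : 'F_q :=
  \sum_(i < n) \sum_(j < n) f i j * e.1 ^+ i * e.2 ^+ j.

(* quaternion algebra: free module on 1,i,j,k with i^2 = j^2 = 1, ij = -ji = k *)
Record quat (T : Type) := Quat { qc0 : T; qc1 : T; qc2 : T; qc3 : T }.

Definition qadd (T : zmodType) (A B : quat T) : quat T :=
  Quat (qc0 A + qc0 B) (qc1 A + qc1 B) (qc2 A + qc2 B) (qc3 A + qc3 B).

Definition qmul (T : zmodType) (mul : T -> T -> T) (A B : quat T) : quat T :=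
  let a0 := qc0 A in let a1 := qc1 A in let a2 := qc2 A in let a3 := qc3 A in
  let b0 := qc0 B in let b1 := qc1 B in let b2 := qc2 B in let b3 := qc3 B in
  Quat (mul a0 b0 + mul a1 b1 + mul a2 b2 - mul a3 b3)
       (mul a0 b1 + mul a1 b0 - mul a2 b3 + mul a3 b2)
       (mul a0 b2 + mul a2 b0 + mul a1 b3 - mul a3 b1)
       (mul a0 b3 + mul a3 b0 + mul a1 b2 - mul a2 b1).

Definition qmap (T U : Type) (f : T -> U) (A : quat T) : quat U :=
  Quat (f (qc0 A)) (f (qc1 A)) (f (qc2 A)) (f (qc3 A)).

Definition qscal (T : zmodType) (s : T) : quat T := Quat s 0 0 0.

Definition Amul (n : nat) := @qmul (Rp int n) (@pmul int n).
Definition Aqmul (q n : nat) := @qmul (Rp 'F_q n) (@pmul 'F_q n).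
Definition Lqmul (q : nat) := @qmul 'F_q *%R.
Definition Aone (n : nat) : quat (Rp int n) := qscal (pconst n 1).
Definition Lqone (q : nat) : quat 'F_q := qscal 1.

Definition qred (q n : nat) (A : quat (Rp int n)) : quat (Rp 'F_q n) :=
  qmap (@predq q n) A.

Definition ternary (n : nat) (f : 'M[int]_n) : Prop :=
  forall i j, f i j \in [:: -1; 0; 1].
Definition qternary (n : nat) (A : quat (Rp int n)) : Prop :=
  [/\ ternary (qc0 A), ternary (qc1 A), ternary (qc2 A) & ternary (qc3 A)].

Definition Eset (q n : nat) : {set 'F_q * 'F_q} :=
  [set e | (e.1 ^+ n == 1) && (e.2 ^+ n == 1)].

Definition lam (q n : nat) (e : 'F_q * 'F_q) : 'M['F_q]_n :=
  \matrix_(i, j) (e.1 * e.2 / (n%:R ^+ 2)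
     * ((('X^n - 1) %/ ('X - e.1%:P)) : {poly 'F_q})`_i
     * ((('X^n - 1) %/ ('X - e.2%:P)) : {poly 'F_q})`_j).

Definition qnorm (n : nat) (F : quat (Rp int n)) : 'M[int]_n :=
  pmul (qc0 F) (qc0 F) - pmul (qc1 F) (qc1 F) - pmul (qc2 F) (qc2 F)
  - pmul (qc3 F) (qc3 F).

(* membership in Q = <q, sigma> subset R' : r mod q is a multiple of sigma in R'_q *)
Definition inQ (q n : nat) (sigma : 'M['F_q]_n) (r : 'M[int]_n) : Prop :=
  exists c : 'M['F_q]_n, predq q r = pmul c sigma.

(* X = Y (mod J), J = Q + Qi + Qj + Qk *)
Definition eqmodJ (q n : nat) (sigma : 'M['F_q]_n) (X Y : quat (Rp int n)) : Prop :=
  [/\ inQ sigma (qc0 X - qc0 Y), inQ sigma (qc1 X - qc1 Y),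
      inQ sigma (qc2 X - qc2 Y) & inQ sigma (qc3 X - qc3 Y)].

(* Hamming weight of rho(X) in Z_q^{4 n^2}: number of (t,(a,b)) with
   (a,b) in E and x_t(a,b) <> 0 *)
Definition rho_weight (q n : nat) (X : quat (Rp 'F_q n)) : nat :=
  addn (addn (addn #|[set e in Eset q n | peval (qc0 X) e != 0]|
                   #|[set e in Eset q n | peval (qc1 X) e != 0]|)
             #|[set e in Eset q n | peval (qc2 X) e != 0]|)
       #|[set e in Eset q n | peval (qc3 X) e != 0]|.

From HB Require Import structures.
From mathcomp Require Import all_boot all_order all_algebra all_fingroup all_solvable all_field.
From mathcomp Require Import ring zify.
Set Implicit Arguments. Unset Strict Implicit. Unset Printing Implicit Defensive.
Import Order.TTheory GRing.Theory Num.Theory.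
Local Open Scope ring_scope.

(* On the common zero set T of the components of G, evaluating the identity
   F^-1 G + vartheta = F' G + tau' shows that tau' and vartheta agree on T.
   Every component of vartheta = W sigma evaluates to w_t c_e <> 0 on T and to 0
   on E \ T, so each component of rho(tau') is nonzero on all of T.  If
   tau' <> vartheta, some component differs as an element of R'_q; since
   evaluation on E is injective (E contains n x n distinct points and the degrees
   in x and y are below n), it differs at a point of E, necessarily outside T,
   where vartheta vanishes: this is one nonzero coordinate more. *)

Definition Esupp (q n : nat) (f : 'M['F_q]_n) : {set 'F_q * 'F_q} :=
  [set e in Eset q n | peval f e != 0].

Definition qeval (q n : nat) (X : quat (Rp 'F_q n)) (e : 'F_q * 'F_q) : quat 'F_q :=
  qmap (fun f => peval f e) X.

Lemma quat_ext (T : Type) (X Y : quat T) :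
  qc0 X = qc0 Y -> qc1 X = qc1 Y -> qc2 X = qc2 Y -> qc3 X = qc3 Y -> X = Y.
Proof. by case: X; case: Y => /= ? ? ? ? ? ? ? ? -> -> -> ->. Qed.

Lemma qadd0l (T : zmodType) (X : quat T) : qadd (qscal 0) X = X.
Proof. by case: X => *; rewrite /qadd /= !add0r. Qed.

Lemma Lqmulr0 (q : nat) (X : quat 'F_q) : Lqmul X (qscal 0) = qscal 0.
Proof. by rewrite /Lqmul /qmul /qscal /= !mulr0 !(addr0, subr0). Qed.

Lemma Lqmul_scal (q : nat) (X : quat 'F_q) (s : 'F_q) :
  Lqmul X (qscal s) = Quat (qc0 X * s) (qc1 X * s) (qc2 X * s) (qc3 X * s).
Proof. by rewrite /Lqmul /qmul /qscal /= !mulr0 !(addr0, subr0, add0r). Qed.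

Section Reduction.
Variables q n : nat.

Lemma predqD (f g : 'M[int]_n) : predq q (f + g) = predq q f + predq q g.
Proof. exact: map_mxD. Qed.

Lemma predqN (f : 'M[int]_n) : predq q (- f) = - predq q f.
Proof. exact: map_mxN. Qed.

Lemma predq_pmul (f g : 'M[int]_n) : predq q (pmul f g) = pmul (predq q f) (predq q g).
Proof.
apply/matrixP => i j; rewrite !mxE rmorph_sum; apply: eq_bigr => k _.
by rewrite rmorph_sum; apply: eq_bigr => l _; rewrite rmorphM /= !mxE.
Qed.

Lemma qred_Amul (X Y : quat (Rp int n)) :
  qred q (Amul X Y) = Aqmul (qred q X) (qred q Y).
Proof. by rewrite /qred /qmap /= !predqD !predqN !predq_pmul. Qed.

End Reduction.

Section Evaluation.
Variables q n : nat.
Hypothesis n_gt0 : (0 < n)%N.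
Local Notation K := 'F_q.

Lemma pevalD (f g : 'M[K]_n) e : peval (f + g) e = peval f e + peval g e.
Proof.
rewrite /peval -big_split; apply: eq_bigr => i _; rewrite -big_split.
by apply: eq_bigr => j _; rewrite !mxE !mulrDl.
Qed.

Lemma pevalN (f : 'M[K]_n) e : peval (- f) e = - peval f e.
Proof.
rewrite /peval -sumrN; apply: eq_bigr => i _; rewrite -sumrN.
by apply: eq_bigr => j _; rewrite !mxE !mulNr.
Qed.

Lemma pevalB (f g : 'M[K]_n) e : peval (f - g) e = peval f e - peval g e.
Proof. by rewrite pevalD pevalN. Qed.

Lemma peval0 e : peval (0 : 'M[K]_n) e = 0.
Proof. by rewrite -(subrr 0) pevalB subrr. Qed.

Lemma pevalZ c (f : 'M[K]_n) e : peval (c *: f) e = c * peval f e.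
Proof.
rewrite /peval mulr_sumr; apply: eq_bigr => i _; rewrite mulr_sumr.
by apply: eq_bigr => j _; rewrite !mxE !mulrA.
Qed.

Lemma peval_sum (I : finType) (P : pred I) (f : I -> 'M[K]_n) e :
  peval (\sum_(i | P i) f i) e = \sum_(i | P i) peval (f i) e.
Proof. exact: (big_morph (fun f => peval f e) (fun f g => pevalD f g e) (peval0 e)). Qed.

Lemma peval_pconst (c : K) e : peval (pconst n c) e = c.
Proof.
pose o := Ordinal n_gt0.
have pconstE i j : pconst n c i j = if (i == o) && (j == o) then c else 0.
  by rewrite mxE.
rewrite /peval (bigD1 o) //= [X in _ + X]big1 => [|i /negbTE io]; last first.
  by rewrite big1 // => j _; rewrite pconstE io !mul0r.
rewrite addr0 (bigD1 o) //= [X in _ + X]big1 => [|j /negbTE jo]; last first.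
  by rewrite pconstE jo andbF !mul0r.
by rewrite pconstE !eqxx !expr0 !mulr1 !addr0.
Qed.

Lemma peval_pairE (f : 'M[K]_n) e :
  peval f e = \sum_(p : 'I_n * 'I_n) f p.1 p.2 * (e.1 ^+ p.1 * e.2 ^+ p.2).
Proof. by rewrite /peval pair_bigA; apply: eq_bigr => p _; rewrite mulrA. Qed.

Lemma peval_pmul (f g : 'M[K]_n) e : e \in Eset q n ->
  peval (pmul f g) e = peval f e * peval g e.
Proof.
rewrite inE => /andP[/eqP e1n /eqP e2n]; rewrite !peval_pairE.
under eq_bigr => p _ do rewrite mxE mulr_suml.
rewrite exchange_big mulr_suml; apply: eq_bigr => k _.
under eq_bigr => p _ do rewrite mulr_suml big_mkcond.
rewrite exchange_big mulr_sumr; apply: eq_bigr => l _; rewrite -big_mkcond /=.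
pose kl : 'I_n * 'I_n :=
  (Ordinal (ltn_pmod (k.1 + l.1) n_gt0), Ordinal (ltn_pmod (k.2 + l.2) n_gt0)).
rewrite (big_pred1 kl) => [|[[u ?] [v ?]]].
  by rewrite /= !expr_mod // !exprD; ring.
by rewrite /= xpair_eqE /= (eq_sym _ u) (eq_sym _ v).
Qed.

Lemma qevalD (X Y : quat (Rp K n)) e :
  qeval (qadd X Y) e = qadd (qeval X e) (qeval Y e).
Proof. by rewrite /qeval /qmap /= !pevalD. Qed.

Lemma qeval_Aqmul (X Y : quat (Rp K n)) e : e \in Eset q n ->
  qeval (Aqmul X Y) e = Lqmul (qeval X e) (qeval Y e).
Proof. by move=> eE; rewrite /qeval /qmap /= !pevalD !pevalN !peval_pmul. Qed.

Lemma qeval_pconst (W : quat K) e : qeval (qmap (@pconst K n) W) e = W.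
Proof. by case: W => *; rewrite /qeval /qmap /= !peval_pconst. Qed.

Lemma qeval_scal (s : 'M[K]_n) e : qeval (qscal s) e = qscal (peval s e).
Proof. by rewrite /qeval /qmap /qscal /= !peval0. Qed.

Lemma Esupp_scale (v s : 'M[K]_n) (w : K) : w != 0 ->
  {in Eset q n, forall e, peval v e = w * peval s e} -> Esupp v = Esupp s.
Proof.
move=> w0 vE; apply: eq_finset => e; apply: andb_id2l => eE.
by rewrite vE // mulf_eq0 negb_or w0.
Qed.

Lemma Esupp_notin (f : 'M[K]_n) e :
  e \in Eset q n -> e \notin Esupp f -> peval f e = 0.
Proof. by move=> eE; rewrite /Esupp in_set eE negbK => /eqP. Qed.

Lemma Esupp_agree_sub (t v : 'M[K]_n) :
  {in Esupp v, forall e, peval t e = peval v e} -> Esupp v \subset Esupp t.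
Proof.
move=> tv; apply/subsetP => e ev; have /setIdP[eE v0] := ev.
by apply/setIdP; rewrite tv.
Qed.

End Evaluation.

Section Lagrange.
Variables (K : fieldType) (n : nat).
Hypothesis n_gt0 : (0 < n)%N.

Lemma size_divXn_sub1_XsubC (a : K) : (size (('X^n - 1) %/ ('X - a%:P))%R <= n)%N.
Proof. by rewrite size_divp ?polyXsubC_eq0 // size_Xn_sub_1 // size_XsubC subn1. Qed.

Lemma divXn_sub1_XsubCK (a : K) : a ^+ n = 1 ->
  ('X^n - 1) %/ ('X - a%:P) * ('X - a%:P) = 'X^n - 1.
Proof. by move=> an1; rewrite divpK // dvdp_XsubCl /root !hornerE an1 subrr. Qed.

Lemma horner_divXn_sub1_XsubC (a b : K) : a ^+ n = 1 -> b ^+ n = 1 ->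
  (('X^n - 1) %/ ('X - b%:P)).[a] = if a == b then n%:R * a ^+ n.-1 else 0.
Proof.
move=> an1 bn1; have := divXn_sub1_XsubCK bn1; set P := _ %/ _ => PE.
case: eqP => [->|/eqP ab].
  have := congr1 (fun p => p^`().[b]) PE.
  rewrite derivM derivXsubC derivB derivXn derivC subr0 !hornerE subrr mulr0 add0r.
  by move=> ->; rewrite hornerMn hornerXn mulr_natl.
have := congr1 (horner^~ a) PE; rewrite /= !hornerE an1 subrr => /eqP.
by rewrite mulf_eq0 subr_eq0 (negbTE ab) orbF => /eqP.
Qed.

End Lagrange.

Lemma peval_lam (q n : nat) (nq0 : (n%:R : 'F_q) != 0) (e e' : 'F_q * 'F_q) :
  e \in Eset q n -> e' \in Eset q n -> peval (lam n e') e = (e == e')%:R.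
Proof.
have n_gt0 : (0 < n)%N by rewrite lt0n; apply: contraNneq nq0 => ->.
case: e e' => [a b] [a' b']; rewrite !inE /= => /andP[/eqP an1 /eqP bn1].
move=> /andP[/eqP an1' /eqP bn1'].
set k := a' * b' / n%:R ^+ 2.
set P := ('X^n - 1) %/ ('X - a'%:P); set Q := ('X^n - 1) %/ ('X - b'%:P).
transitivity (k * (\sum_(i < n) P`_i * a ^+ i) * (\sum_(j < n) Q`_j * b ^+ j)).
  rewrite /peval [X in _ = X * _]mulr_sumr mulr_suml; apply: eq_bigr => i _.
  by rewrite mulr_sumr; apply: eq_bigr => j _; rewrite mxE /= -/k -/P -/Q; ring.
have sP := size_divXn_sub1_XsubC n_gt0 a'; have sQ := size_divXn_sub1_XsubC n_gt0 b'.
rewrite -(horner_coef_wide a sP) -(horner_coef_wide b sQ).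
rewrite !horner_divXn_sub1_XsubC // xpair_eqE /k.
case: (a =P a') => [<-|]; case: (b =P b') => [<-|] /=; rewrite ?mulr0 ?mul0r //.
have aa : a * a ^+ n.-1 = 1 by rewrite -exprS prednK.
have bb : b * b ^+ n.-1 = 1 by rewrite -exprS prednK.
transitivity ((a * a ^+ n.-1) * (b * b ^+ n.-1) * (n%:R ^+ 2 / n%:R ^+ 2)); first by ring.
by rewrite aa bb divff ?expf_neq0 // !mul1r.
Qed.

Lemma Esupp_lam_sum (q n : nat) (nq0 : (n%:R : 'F_q) != 0)
    (T : {set 'F_q * 'F_q}) (c : 'F_q * 'F_q -> 'F_q) :
  T \subset Eset q n -> {in T, forall e, c e != 0} ->
  Esupp (\sum_(e in T) c e *: lam n e) = T.
Proof.
move=> TE c0; set s := \sum_(e in T) _.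
have sE e : e \in Eset q n -> peval s e = if e \in T then c e else 0.
  move=> eE; rewrite peval_sum.
  rewrite (eq_bigr (fun e' => c e' * (e == e')%:R)) => [|e' e'T]; last first.
    by rewrite pevalZ peval_lam // (subsetP TE).
  have [eT|eT] := boolP (e \in T).
    rewrite (bigD1 e) //= eqxx mulr1 big1 ?addr0 // => e' /andP[_ e'e].
    by rewrite eq_sym (negbTE e'e) mulr0.
  rewrite big1 // => e' e'T; case: eqP => [ee'|]; last by rewrite mulr0.
  by move: eT; rewrite ee' e'T.
apply/eqP; rewrite eqEsubset; apply/andP; split; apply/subsetP => e.
  by case/setIdP => eE; rewrite sE //; case: (e \in T); rewrite ?eqxx.
by move=> eT; have eE := subsetP TE e eT; apply/setIdP; rewrite sE // eT c0.
Qed.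

Lemma primitive_root_Fp (q n : nat) : prime q -> (0 < n)%N -> (n %| q.-1)%N ->
  exists w : 'F_q, n.-primitive_root w.
Proof.
move=> q_pr n_gt0 nq1.
have /cyclicP[g gen_g] := @field_unit_group_cyclic _ [set: {unit 'F_q}]%G.
have og : #[g]%g = q.-1 by rewrite /order -gen_g card_finField_unit card_Fp.
set h := (g ^+ (q.-1 %/ n))%g.
have oh : #[h]%g = n.
  by rewrite orderXdiv og ?dvdn_div // divnA // mulKn // ltn_predRL prime_gt1.
have hn1 : (h ^+ n = 1)%g by rewrite -oh expg_order.
have [m m_prim m_dvd] : {m | m.-primitive_root (val h) & (m %| n)%N}.
  by apply: prim_order_exists; rewrite // -FinRing.val_unitX hn1.
exists (val h); suff -> : n = m by [].
apply/eqP; rewrite eqn_dvd m_dvd andbT -oh order_dvdn; apply/eqP; apply: val_inj.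
by rewrite FinRing.val_unitX (prim_expr_order m_prim).
Qed.

Lemma coefs_eq0_of_roots (K : fieldType) (n : nat) (rs : seq K) (f : 'I_n -> K) :
  uniq rs -> (n <= size rs)%N ->
  {in rs, forall x, \sum_(i < n) f i * x ^+ i = 0} -> forall i, f i = 0.
Proof.
case: n f => [|n] f urs srs f_rs i; first by case: i.
pose P : {poly K} := \poly_(k < n.+1) f (inord k).
have P0 : P = 0.
  apply: (roots_geq_poly_eq0 (rs := rs)) => //; last exact: leq_trans (size_poly _ _) srs.
  apply/allP => x xr; rewrite /root horner_poly; apply/eqP.
  by rewrite -[RHS](f_rs x xr); apply: eq_bigr => k _; rewrite inord_val.
by have := congr1 (fun p : {poly K} => p`_i) P0; rewrite coef_poly ltn_ord inord_val coef0.
Qed.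

Lemma mx_coefs_eq0_of_roots (K : fieldType) (n : nat) (rs : seq K) (M : 'M[K]_n) :
  uniq rs -> (n <= size rs)%N ->
  {in rs &, forall a b, \sum_(i < n) \sum_(j < n) M i j * a ^+ i * b ^+ j = 0} ->
  M = 0.
Proof.
move=> urs srs M_rs; apply/matrixP => i j; rewrite mxE.
have row_rs b : b \in rs -> forall i, \sum_(j < n) M i j * b ^+ j = 0.
  move=> br; apply: coefs_eq0_of_roots urs srs _ => a ar.
  rewrite -[RHS](M_rs a b ar br); apply: eq_bigr => k _.
  by rewrite mulr_suml; apply: eq_bigr => l _; ring.
apply: (coefs_eq0_of_roots (f := M i) urs srs) => b br.
by rewrite -[RHS](row_rs b br i); apply: eq_bigr => l _; ring.
Qed.

Section EvaluationOnE.
Variables q n : nat.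
Hypotheses (q_pr : prime q) (n_gt0 : (0 < n)%N) (nq1 : (n %| q.-1)%N).

(* The powers of a primitive n-th root of unity give n distinct points in each
   coordinate of E. *)
Lemma peval_Eset_inj (f g : 'M['F_q]_n) :
  {in Eset q n, forall e, peval f e = peval g e} -> f = g.
Proof.
move=> fg; apply/eqP; rewrite -subr_eq0; apply/eqP.
have [w w_prim] := primitive_root_Fp q_pr n_gt0 nq1.
pose rs := [seq w ^+ k | k <- iota 0 n].
have urs : uniq rs.
  rewrite map_inj_in_uniq ?iota_uniq // => i j; rewrite !mem_iota !add0n => ilt jlt.
  by move/eqP; rewrite (eq_prim_root_expr w_prim) !modn_small // => /eqP.
have rs_unity x : x \in rs -> x ^+ n = 1.
  by case/mapP => k _ ->; rewrite exprAC (prim_expr_order w_prim) expr1n.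
apply: (mx_coefs_eq0_of_roots urs); first by rewrite size_map size_iota.
move=> a b ar br; have abE : (a, b) \in Eset q n by rewrite inE /= !rs_unity ?eqxx.
by move/eqP: (fg _ abE); rewrite -subr_eq0 -pevalB => /eqP.
Qed.

Lemma Esupp_agree_proper (t v : 'M['F_q]_n) : t != v ->
  {in Esupp v, forall e, peval t e = peval v e} -> Esupp v \proper Esupp t.
Proof.
move=> tv agree; rewrite properEneq Esupp_agree_sub // andbT.
apply: contraNneq tv => supp_eq; apply/eqP/peval_Eset_inj => e eE.
have [ev|nv] := boolP (e \in Esupp v); first exact: agree.
by rewrite !Esupp_notin // -supp_eq.
Qed.

Lemma rho_weight_gt (S : {set 'F_q * 'F_q}) (X V : quat (Rp 'F_q n)) :
  [/\ Esupp (qc0 V) = S, Esupp (qc1 V) = S, Esupp (qc2 V) = S & Esupp (qc3 V) = S] ->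
  {in S, forall e, qeval X e = qeval V e} -> X <> V -> (4 * #|S| < rho_weight X)%N.
Proof.
move=> [S0 S1 S2 S3] XV XnV.
have card_supp (t v : 'M['F_q]_n) : Esupp v = S -> {in S, forall e, peval t e = peval v e} ->
    (#|S| <= #|Esupp t|)%N /\ (t != v -> (#|S| < #|Esupp t|)%N).
  move=> <- tv; split; first exact/subset_leq_card/Esupp_agree_sub.
  by move=> /Esupp_agree_proper/(_ tv)/proper_card.
have [le0 lt0] := card_supp _ _ S0 (fun e eS => congr1 (@qc0 _) (XV e eS)).
have [le1 lt1] := card_supp _ _ S1 (fun e eS => congr1 (@qc1 _) (XV e eS)).
have [le2 lt2] := card_supp _ _ S2 (fun e eS => congr1 (@qc2 _) (XV e eS)).
have [le3 lt3] := card_supp _ _ S3 (fun e eS => congr1 (@qc3 _) (XV e eS)).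
have sum_gt (s a0 a1 a2 a3 : nat) :
    (s <= a0)%N -> (s <= a1)%N -> (s <= a2)%N -> (s <= a3)%N ->
    [\/ s < a0, s < a1, s < a2 | s < a3]%N -> (4 * s < a0 + a1 + a2 + a3)%N.
  by move=> ? ? ? ? []; lia.
apply: (sum_gt _ _ _ _ _ le0 le1 le2 le3).
have [X0|/lt0] := eqVneq (qc0 X) (qc0 V); last exact: Or41.
have [X1|/lt1] := eqVneq (qc1 X) (qc1 V); last exact: Or42.
have [X2|/lt2] := eqVneq (qc2 X) (qc2 V); last exact: Or43.
have [X3|/lt3] := eqVneq (qc3 X) (qc3 V); last exact: Or44.
by case: XnV; apply: quat_ext.
Qed.

End EvaluationOnE.



Theorem lemma7
  (n p q : nat) (hn : prime n) (hp : prime p) (hq : prime q) (hpq : p != q)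
  (hcpq : coprime p q) (hcnq : coprime n q) (hnq : (n %| q.-1)%N)
  (F G Finv : quat (Rp int n))
  (hF : qternary F) (hG : qternary G)
  (T : {set 'F_q * 'F_q})
  (hT : T = [set e in Eset q n | [&& peval (predq q (qc0 G)) e == 0,
                                      peval (predq q (qc1 G)) e == 0,
                                      peval (predq q (qc2 G)) e == 0 &
                                      peval (predq q (qc3 G)) e == 0]])
  (hTne : T != set0)
  (hNF : [set e in Eset q n | peval (predq q (qnorm F)) e == 0] \subset T)
  (c : 'F_q * 'F_q -> 'F_q) (hc : forall e, e \in T -> c e != 0)
  (sigma : Rp 'F_q n) (hsigma : sigma = \sum_(e in T) c e *: lam n e)
  (hFinv : eqmodJ sigma (Amul F Finv) (Aone n) /\ eqmodJ sigma (Amul Finv F) (Aone n))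
  (W : quat 'F_q)
  (hWinv : exists W' : quat 'F_q, Lqmul W W' = Lqone q /\ Lqmul W' W = Lqone q)
  (hW0 : [/\ qc0 W != 0, qc1 W != 0, qc2 W != 0 & qc3 W != 0])
  (vartheta : quat (Rp 'F_q n))
  (hvartheta : vartheta = Aqmul (qmap (@pconst 'F_q n) W) (qscal sigma))
  (Htil : quat (Rp 'F_q n))
  (hHtil : Htil = qadd (qred q (Amul Finv G)) vartheta) :
  forall tau' : quat (Rp int n),
    (exists F' alpha' : quat (Rp int n),
        [/\ qred q (Amul F F') = qred q (qadd (Aone n) (Amul alpha' tau')),
            qred q (Amul F' F) = qred q (qadd (Aone n) (Amul alpha' tau')) &
            Htil = qadd (qred q (Amul F' G)) (qred q tau')]) ->
    qred q tau' <> vartheta ->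
    (rho_weight (qred q tau') > 4 * #|T|)%N.
Proof.
move=> tau' [F' [alpha' [_ _ HtilE]]] tau_neq.
have n_gt0 := prime_gt0 hn.
have nq0 : (n%:R : 'F_q) != 0.
  by rewrite -(dvdn_pcharf (pchar_Fp hq)) -prime_coprime // coprime_sym.
have TE : T \subset Eset q n by rewrite hT; apply/subsetP => e /setIdP[].
have G0 : {in T, forall e, qeval (qred q G) e = qscal 0}.
  move=> e; rewrite hT => /setIdP[_ /and4P[/eqP g0 /eqP g1 /eqP g2 /eqP g3]].
  by rewrite /qeval /qmap /= g0 g1 g2 g3.
have agree : {in T, forall e, qeval (qred q tau') e = qeval vartheta e}.
  move=> e eT; have eE := subsetP TE e eT.
  move: (congr1 (fun X => qeval X e) HtilE); rewrite hHtil !qevalD !qred_Amul.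
  by rewrite !qeval_Aqmul // G0 // !Lqmulr0 !qadd0l => ->.
have varthetaE : {in Eset q n, forall e, qeval vartheta e =
    Quat (qc0 W * peval sigma e) (qc1 W * peval sigma e)
         (qc2 W * peval sigma e) (qc3 W * peval sigma e)}.
  by move=> e eE; rewrite hvartheta qeval_Aqmul // qeval_pconst // qeval_scal Lqmul_scal.
have supp_sigma : Esupp sigma = T by rewrite hsigma Esupp_lam_sum.
have [w0 w1 w2 w3] := hW0.
apply: (rho_weight_gt hq n_gt0 hnq _ agree tau_neq); rewrite -supp_sigma; split.
- exact: Esupp_scale w0 (fun e eE => congr1 (@qc0 _) (varthetaE e eE)).
- exact: Esupp_scale w1 (fun e eE => congr1 (@qc1 _) (varthetaE e eE)).
- exact: Esupp_scale w2 (fun e eE => congr1 (@qc2 _) (varthetaE e eE)).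
- exact: Esupp_scale w3 (fun e eE => congr1 (@qc3 _) (varthetaE e eE)).
Qed.
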